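(* Let $l\geq 0$ be an integer. Then $f_2(8l+i)=6l+i$ for every $i$ with $0\leq i\leq 5$, and $f_2(8l+6)=f_2(8l+7)=6l+5$.
   Context: $\Sigma_k=\{0,1,\ldots,k-1\}$. A border of a word $w$ is a non-empty word that is both a proper prefix and a proper suffix of $w$; $w$ is unbordered if it has no border. A border $u$ of $w$ is non-overlapping if $|u|\le |w|/2$. The smallest BP-factorization of a word $w$ is the factorization $w=w_m\cdots w_1w_0w_1\cdots w_m$ ($m\ge 0$) in which, for each $i\ge 1$, $w_i$ is the longest non-overlapping border of $w_i\cdots w_1w_0w_1\cdots w_i$, and $w_0$ is either empty or unbordered (i.e., one repeatedly removes the longest non-overlapping border from both ends until an empty or unbordered central word remains). Its width is $2m+1$ if $w_0$ is non-empty and $2m$ if $w_0$ is empty. $f_k(n)$ denotes the maximum width of the smallest BP-factorization over all length-$n$ words over $\Sigma_k$. *)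

From mathcomp Require Import all_boot.
Set Implicit Arguments. Unset Strict Implicit. Unset Printing Implicit Defensive.

Section Words.
Variable T : eqType.

Definition is_border (u w : seq T) : bool :=
  [&& 0 < size u, size u < size w, prefix u w & suffix u w].

(* w is unbordered: no border (no word u is a border of w). Borders of w
   have length < size w and are determined by their length, so it suffices
   to range over the prefixes of w. *)
Definition unbordered (w : seq T) : bool :=
  ~~ [exists j : 'I_(size w), is_border (take j w) w].

(* length of the longest non-overlapping border (|u| <= |w|/2); 0 if none *)
Definition lnob (w : seq T) : nat :=
  \max_(j < (size w)./2.+1 | is_border (take j w) w) j.

(* width of the smallest BP-factorization, computed with fuel *)
Fixpoint bp_width_fuel (fuel : nat) (w : seq T) : nat :=
  match fuel with
  | 0 => 0
  | fuel'.+1 =>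
      if w == [::] then 0
      else if unbordered w then 1
      else let j := lnob w in
           (bp_width_fuel fuel' (take (size w - j.*2) (drop j w))).+2
  end.

Definition bp_width (w : seq T) : nat := bp_width_fuel (size w) w.

End Words.

Definition f (k n : nat) : nat :=
  \max_(w : n.-tuple 'I_k) bp_width (tval w).

From mathcomp Require Import all_boot zify.
Set Implicit Arguments. Unset Strict Implicit. Unset Printing Implicit Defensive.

(* Each peel of a border of length j removes 2j letters and adds 2 to the
   width.  Over a binary alphabet three consecutive peels of length 1 are
   impossible: if they all have length 1 and the word starts with x y z, then
   x = y, y = z or x = z would give a longer non-overlapping border of the
   word or of its first peel, so x, y, z would be three distinct letters.
   Hence every 8 letters contribute at most 6 to the width, and the width of a
   word of length n is at most 6 (n / 8) + min (n mod 8) 5.  Conversely the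
   frame abab u abba peels off as a, b, ab, adding 6 to the width as long as
   no longer non-overlapping border appears; iterating it around short
   centres attains the bound. *)

Section Borders.
Variable T : eqType.
Implicit Types (p u w x y : seq T).

Lemma infix_cat3 p x u y : size p <= (size u).+1 ->
  infix p (x ++ u ++ y) = infix p (x ++ u) || infix p (u ++ y).
Proof.
move=> size_p; apply/idP/orP => [/infixP[s1 [s2 e]] | [|]]; last 2 first.
- by rewrite catA => /infix_catr.
- exact: infix_catl.
have := congr1 size e; rewrite !size_cat => size_e.
have [le_xu | lt_xu] := leqP (size s1 + size p) (size x + size u).
  left; apply/infixP; set k := size x + size u - (size s1 + size p).
  exists s1, (take k s2); have := congr1 (take (size x + size u)) e.
  rewrite catA take_size_cat ?size_cat // => ->.
  rewrite -[in LHS](cat_take_drop k s2) !catA take_size_cat // !size_cat size_takel; lia.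
right; apply/infixP; exists (drop (size x) s1), s2.
have := congr1 (drop (size x)) e; rewrite drop_size_cat // => ->.
rewrite -[in LHS](cat_take_drop (size x) s1) -catA drop_size_cat // size_takel //; lia.
Qed.

Definition inner w j : seq T := take (size w - j.*2) (drop j w).

Definition frame x u : seq T := x ++ u ++ x.

Definition rhalf w : seq T := drop (uphalf (size w)) w.

Lemma size_inner w j : size (inner w j) = size w - j.*2.
Proof. by rewrite size_takel // size_drop; lia. Qed.

Lemma inner_frame x u : inner (frame x u) (size x) = u.
Proof.
by rewrite /inner drop_size_cat // !size_cat -addnn addnCA addnK take_size_cat.
Qed.

Lemma rhalf_cat x u y : size x = size y -> rhalf (x ++ u ++ y) = rhalf u ++ y.
Proof.
move=> sxy; rewrite /rhalf !size_cat -sxy.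
have -> : uphalf (size x + (size u + size x)) = uphalf (size u) + size x by lia.
rewrite -drop_drop drop_size_cat // drop_cat.
case: ltnP => hu; first by [].
have -> : uphalf (size u) = size u by move: hu; lia.
by rewrite subnn drop0 drop_size.
Qed.

Lemma is_border_take w j :
  is_border (take j w) w = [&& 0 < j, j < size w & drop (size w - j) w == take j w].
Proof.
rewrite /is_border prefix_take suffixE size_take.
by case: (ltnP j (size w)) => hj; rewrite ?hj ?ltnn ?andbF.
Qed.

Lemma border_take_cat x u y j : 0 < j -> j <= size x -> j <= size y ->
  is_border (take j (x ++ u ++ y)) (x ++ u ++ y) = (take j x == drop (size y - j) y).
Proof.
move=> j_gt0 jx jy; rewrite is_border_take j_gt0 takel_cat // catA drop_cat !size_cat.
rewrite ifN; last by rewrite -leqNgt; lia.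
have -> : size x + size u + size y - j - (size x + size u) = size y - j by lia.
by rewrite eq_sym; case: ltnP => //; lia.
Qed.

Lemma frame_border w j : j <= (size w)./2 -> is_border (take j w) w ->
  w = frame (take j w) (inner w j).
Proof.
move=> hj; rewrite is_border_take => /and3P[_ _ /eqP eq_wj]; rewrite /frame /inner.
rewrite -{1}(cat_take_drop j w) -{1}(cat_take_drop (size w - j.*2) (drop j w)).
by rewrite drop_drop (_ : _ + j = size w - j) ?eq_wj //; lia.
Qed.

Lemma suffix_rhalf_border w j : j <= (size w)./2 -> is_border (take j w) w ->
  suffix (take j w) (rhalf w).
Proof.
move=> hj; rewrite is_border_take => /and3P[_ _ /eqP <-].
rewrite /rhalf (_ : size w - j = (size w - j - uphalf (size w)) + uphalf (size w)).
  by rewrite -drop_drop suffix_drop.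
lia.
Qed.

Lemma infix_rhalf_border w i k p : i <= (size w)./2 -> is_border (take i w) w ->
  k <= i -> infix p (take k w) -> infix p (rhalf w).
Proof.
move=> hi bi ki pk; apply: infix_suffix_trans (suffix_rhalf_border hi bi).
by apply: infix_prefix_trans pk _; rewrite -(take_takel w ki) prefix_take.
Qed.

Lemma lnob_le_half w : lnob w <= (size w)./2.
Proof. by apply/bigmax_leqP => j _; rewrite -ltnS. Qed.

Lemma leq_lnob w j : j <= (size w)./2 -> is_border (take j w) w -> j <= lnob w.
Proof.
rewrite -ltnS => hj bj.
exact: (@leq_bigmax_cond _ _ (fun i : 'I_ _ => nat_of_ord i) (Ordinal hj)).
Qed.

Lemma lnob_border w : 0 < lnob w -> is_border (take (lnob w) w) w.
Proof.
rewrite /lnob; set P := fun j : 'I_(size w)./2.+1 => is_border (take j w) w.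
have [j0 Pj0 _ | noP] := pickP P; last by rewrite big_pred0.
have [|i Pi -> //] := eq_bigmax_cond (fun i : 'I_ _ => nat_of_ord i) (A := P).
by apply/card_gt0P; exists j0.
Qed.

Lemma border_shorten w j : (size w)./2 < j -> is_border (take j w) w ->
  is_border (take (j.*2 - size w) w) w.
Proof.
rewrite !is_border_take => hj /and3P[j_gt0 j_lt /eqP eq_wj].
set k := j.*2 - size w; apply/and3P; split; [lia | lia |].
rewrite (_ : size w - k = (size w - j) + (size w - j)); last by lia.
rewrite -drop_drop eq_wj (_ : take j w = take (k + (size w - j)) w); last by congr take; lia.
by rewrite -take_drop eq_wj take_takel //; lia.
Qed.

Lemma border_lnob_gt0 w j : is_border (take j w) w -> 0 < lnob w.
Proof.
elim/ltn_ind: j => j IH bj; have [hj | hj] := leqP j (size w)./2.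
  by apply: leq_trans (leq_lnob hj bj); move: bj; rewrite is_border_take => /andP[].
apply: IH (border_shorten hj bj).
by move: bj; rewrite is_border_take => /and3P[_ j_lt _]; lia.
Qed.

Lemma lnob_gt0 w : (0 < lnob w) = ~~ unbordered w.
Proof.
rewrite /unbordered negbK; apply/idP/existsP => [/lnob_border bw | [j /border_lnob_gt0 //]].
have j_lt : lnob w < size w by move: bw; rewrite is_border_take => /and3P[].
by exists (Ordinal j_lt).
Qed.

Lemma lnob_eq w j : 0 < j <= (size w)./2 -> is_border (take j w) w ->
  (forall i, j < i <= (size w)./2 -> ~~ is_border (take i w) w) -> lnob w = j.
Proof.
move=> /andP[j_gt0 hj] bj nob; apply/eqP; rewrite eqn_leq leq_lnob // andbT leqNgt.
apply/negP => lt_j; have /negP := nob _ (introT andP (conj lt_j (lnob_le_half w))).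
by apply; apply: lnob_border; apply: leq_trans lt_j.
Qed.

Lemma size_le_lnob_frame x u : 0 < size x -> size x <= lnob (frame x u).
Proof.
move=> x_gt0; apply: leq_lnob; first by rewrite !size_cat; lia.
by rewrite border_take_cat // take_size subnn drop0.
Qed.

Lemma lnob1_frame w : lnob w = 1 -> exists c, w = frame [:: c] (inner w 1).
Proof.
move=> l1; have bw : is_border (take 1 w) w by rewrite -l1 lnob_border ?l1.
have hw : 1 <= (size w)./2 by rewrite -l1 lnob_le_half.
by move: (frame_border hw bw); case: w hw {l1 bw} => [|c s] //= _; rewrite take0; exists c.
Qed.

Lemma bp_width_fuel_irr f1 f2 w : size w <= f1 -> size w <= f2 ->
  bp_width_fuel f1 w = bp_width_fuel f2 w.
Proof.
elim: f1 f2 w => [|f1 IH] [|f2] w //.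
- by rewrite leqn0 => /nilP->.
- by rewrite leqn0 => _ /nilP->.
move=> h1 h2 /=; case: ifP => // _; case: ifP => // bd; congr _.+2.
have := lnob_gt0 w; rewrite bd => lnob_pos.
by apply: IH; rewrite size_inner; lia.
Qed.

Lemma bp_widthE w : bp_width w =
  if w == [::] then 0 else if unbordered w then 1 else (bp_width (inner w (lnob w))).+2.
Proof.
case: w => [|c s] //; rewrite /bp_width /=; case: ifP => // bd; congr _.+2.
have := lnob_gt0 (c :: s); rewrite bd => lnob_pos.
by apply: bp_width_fuel_irr; rewrite size_inner //=; lia.
Qed.

Lemma bp_width_peel w : 0 < lnob w -> bp_width w = (bp_width (inner w (lnob w))).+2.
Proof.
move=> lnob_pos; have /negbTE bd : ~~ unbordered w by rewrite -lnob_gt0.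
have /negbTE w_ne : w != [::].
  by apply: contraTneq lnob_pos => ->; rewrite -leqNgt (lnob_le_half [::]).
by rewrite [LHS]bp_widthE w_ne bd.
Qed.

Variant bp_width_spec w : nat -> Type :=
  | BpWidthNil of w = [::] : bp_width_spec w 0
  | BpWidthUnbordered of w != [::] & unbordered w : bp_width_spec w 1
  | BpWidthPeel of 0 < lnob w : bp_width_spec w (bp_width (inner w (lnob w))).+2.

Lemma bp_widthP w : bp_width_spec w (bp_width w).
Proof.
rewrite bp_widthE; case: eqP => [-> | /eqP w_ne]; first exact: BpWidthNil.
by case: ifP => bd; constructor; rewrite // lnob_gt0 bd.
Qed.

Lemma uniq_take3_unit_peels w : lnob w = 1 -> lnob (inner w 1) = 1 ->
  lnob (inner (inner w 1) 1) = 1 -> uniq (take 3 w).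
Proof.
move=> lw lu lv; have [x ew] := lnob1_frame lw.
have [y eu] := lnob1_frame lu; have [z ev] := lnob1_frame lv.
set t := inner (inner (inner w 1) 1) 1 in ev.
have {}eu : inner w 1 = [:: y; z] ++ t ++ [:: z; y] by rewrite eu ev /frame /= -!catA.
have {}ew : w = [:: x; y; z] ++ t ++ [:: z; y; x] by rewrite ew eu /frame /= -!catA.
rewrite ew /= take0 /= !inE !negb_or !andbT -andbA; apply/and3P; split; apply/eqP.
- move=> exy; suff : 2 <= lnob w by rewrite lw.
  have -> : w = frame [:: y; y] ([:: z] ++ t ++ [:: z]).
    by rewrite ew exy /frame /= -!catA.
  exact: (@size_le_lnob_frame [:: y; y]).
- move=> exz; suff : 3 <= lnob w by rewrite lw.
  by rewrite ew exz; apply: (@size_le_lnob_frame [:: z; y; z]).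
- move=> eyz; suff : 2 <= lnob (inner w 1) by rewrite lu.
  by rewrite eu eyz; apply: (@size_le_lnob_frame [:: z; z]).
Qed.

(* List-based variants of [lnob], [unbordered] and [bp_width]: the originals
   range over ordinals through locked big operators and quantifiers, which
   [vm_compute] cannot unfold. *)
Definition lnob_seq w : nat :=
  foldr maxn 0 [seq j <- iota 0 (size w)./2.+1 | is_border (take j w) w].

Definition unbordered_seq w : bool :=
  ~~ has (fun j => is_border (take j w) w) (iota 0 (size w)).

Fixpoint bp_width_seq fuel w : nat :=
  if fuel is fuel'.+1 then
    if w == [::] then 0 else if unbordered_seq w then 1
    else (bp_width_seq fuel' (inner w (lnob_seq w))).+2
  else 0.

Lemma bp_width_seqE w : bp_width w = bp_width_seq (size w) w.
Proof.
have lnobE v : lnob v = lnob_seq v.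
  rewrite /lnob /lnob_seq -(big_mkord (fun j => is_border (take j v) v) id).
  by rewrite -big_filter foldrE.
have unborderedE v : unbordered v = unbordered_seq v.
  rewrite /unbordered /unbordered_seq; congr negb; apply/existsP/hasP => [[j bj] | [j]].
    by exists (val j); rewrite // mem_iota /=.
  by rewrite mem_iota /= => j_lt bj; exists (Ordinal j_lt).
rewrite /bp_width; suff -> : forall fuel v, bp_width_fuel fuel v = bp_width_seq fuel v by [].
by elim=> [|fuel IH] v //=; rewrite unborderedE lnobE IH.
Qed.
End Borders.

Lemma no_three_unit_peels_binary (w : seq 'I_2) : lnob w = 1 -> lnob (inner w 1) = 1 ->
  lnob (inner (inner w 1) 1) != 1.
Proof.
move=> lw lu; apply/eqP => lv; have := uniq_take3_unit_peels lw lu lv.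
have := lnob_le_half (inner (inner w 1) 1); rewrite lv !size_inner => size_w.
(* The two [size w] here have convertible but distinct implicit types, which
   [lia] would treat as different atoms; [set] merges them. *)
move/card_uniqP; rewrite size_takel; last by set n := size w in size_w *; lia.
by move=> card3; have := max_card (mem (take 3 w)); rewrite card3 card_ord.
Qed.

Definition width_bound n : nat := 6 * (n %/ 8) + minn (n %% 8) 5.

Lemma leq_width_bound k n : k <= minn n 5 -> k <= width_bound n.
Proof. rewrite /width_bound; lia. Qed.

Lemma width_bound_peels m r n : m <= 3 -> m.+1.*2 <= r <= n ->
  m.*2 + width_bound (n - r) <= width_bound n.
Proof. rewrite /width_bound; lia. Qed.

Section UpperBound.
Variable T : eqType.
Hypothesis no_three_unit_peels : forall w : seq T,
  lnob w = 1 -> lnob (inner w 1) = 1 -> lnob (inner (inner w 1) 1) != 1.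

Lemma bp_width_le_bound (w : seq T) : bp_width w <= width_bound (size w).
Proof.
have [n] := ubnP (size w); elim: n w => // n IH w /ltnSE le_wn.
have peels m (v : seq T) : m <= 3 -> m.+1.*2 <= size w - size v -> size v <= size w ->
    m.*2 + bp_width v <= width_bound (size w).
  move=> m_le3 r_ge v_le.
  apply: leq_trans (width_bound_peels (r := size w - size v) m_le3 _); last first.
    by rewrite r_ge leq_subr.
  by rewrite subKn // leq_add2l IH //; lia.
have := lnob_le_half w; case: (bp_widthP w) => [-> // | w_ne _ _ | lw_gt0].
  by apply: leq_width_bound; rewrite leq_min andbT lt0n size_eq0.
have [lw_gt1 | lw_le1] := ltnP 1 (lnob w) => lw_le.
  by apply: (peels 1); rewrite ?size_inner; lia.
have lw1 : lnob w = 1 by lia.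
rewrite lw1 in lw_le *; set u := inner w 1.
have size_u : size u = size w - 2 by rewrite size_inner.
have := lnob_le_half u; case: (bp_widthP u) => [u_nil | u_ne _ | lu_gt0] lu_le.
- by apply: leq_width_bound; move: size_u; rewrite u_nil /=; lia.
- by apply: leq_width_bound; move: u_ne; rewrite -size_eq0 size_u; lia.
have [lu_gt1 | lu_le1] := ltnP 1 (lnob u).
  by apply: (peels 2); rewrite ?size_inner; lia.
have lu1 : lnob u = 1 by lia.
rewrite lu1 in lu_le *; set v := inner u 1; have size_v : size v = size w - 4.
  by rewrite size_inner size_u; lia.
have := lnob_le_half v; case: (bp_widthP v) => [v_nil | v_ne _ | lv_gt0] lv_le.
- by apply: leq_width_bound; move: size_v; rewrite v_nil /=; lia.
- by apply: leq_width_bound; move: v_ne; rewrite -size_eq0 size_v; lia.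
have lv_gt1 : 1 < lnob v by move: (no_three_unit_peels lw1 lu1); rewrite -/u -/v; lia.
by apply: (peels 3); rewrite ?size_inner; lia.
Qed.
End UpperBound.

Definition a : 'I_2 := ord0.
Definition b : 'I_2 := ord_max.

Definition wrap (u : seq 'I_2) : seq 'I_2 :=
  frame [:: a] (frame [:: b] (frame [:: a; b] u)).

(* Peeling [wrap u] passes through [bab u abb] and [ab u ab].  A longer
   non-overlapping border of either would copy its prefix [bab], resp. [aba]
   (when [u] is empty or starts with [a]), into its right half, that is into
   [rhalf u ++ abb], resp. [rhalf u ++ ab]. *)
Definition wrappable (u : seq 'I_2) : bool :=
  [&& ~~ infix [:: b; a; b] (rhalf u ++ [:: a; b; b]),
      ~~ infix [:: a; b; a] (rhalf u ++ [:: a; b]) & head a u == a].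

Lemma wrapE u : wrap u = [:: a; b; a; b] ++ u ++ [:: a; b; b; a].
Proof. by rewrite /wrap /frame /= -!catA. Qed.

Lemma lnob_wrap u : wrappable u -> lnob (wrap u) = 1.
Proof.
case/and3P => bab_free _ _; rewrite wrapE.
apply: lnob_eq => [| | i /andP[i_gt1 i_le]]; first by rewrite !size_cat /=; lia.
  by rewrite border_take_cat.
apply/negP => bi; have [i_lt4 | i_ge4] := ltnP i 4.
  by move: bi; rewrite border_take_cat //; case: i i_gt1 i_lt4 {i_le} => [|[|[|[|]]]].
have : infix [:: b; a; b] (rhalf ([:: a; b; a; b] ++ u ++ [:: a; b; b; a])).
  by apply: (infix_rhalf_border i_le bi i_ge4); rewrite takel_cat.
rewrite rhalf_cat // (@infix_cat3 _ _ (rhalf u) [:: a; b; b] [:: a]) //.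
by case/orP => //; apply/negP.
Qed.

Lemma lnob_frame_b_ab u : wrappable u -> lnob (frame [:: b] (frame [:: a; b] u)) = 1.
Proof.
case/and3P => bab_free _ _.
have -> : frame [:: b] (frame [:: a; b] u) = [:: b; a; b] ++ u ++ [:: a; b; b].
  by rewrite /frame /= -!catA.
apply: lnob_eq => [| | i /andP[i_gt1 i_le]]; first by rewrite !size_cat /=; lia.
  by rewrite border_take_cat.
apply/negP => bi; have [i_lt3 | i_ge3] := ltnP i 3.
  by move: bi; rewrite border_take_cat //; case: i i_gt1 i_lt3 {i_le} => [|[|[|]]].
have : infix [:: b; a; b] (rhalf ([:: b; a; b] ++ u ++ [:: a; b; b])).
  by apply: (infix_rhalf_border i_le bi i_ge3); rewrite takel_cat.
by rewrite rhalf_cat //; apply/negP.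
Qed.

Lemma lnob_frame_ab u : wrappable u -> lnob (frame [:: a; b] u) = 2.
Proof.
case/and3P => _ aba_free head_u.
apply: lnob_eq => [| | i /andP[i_gt2 i_le]]; first by rewrite !size_cat /=; lia.
  by rewrite border_take_cat.
apply/negP => bi; case/negP: aba_free.
have : infix [:: a; b; a] (rhalf ([:: a; b] ++ u ++ [:: a; b])).
  apply: (infix_rhalf_border i_le bi i_gt2).
  by case: u {bi i_le} head_u => [|c s] //= /eqP->; rewrite take0.
by rewrite rhalf_cat.
Qed.

Lemma bp_width_wrap u : wrappable u -> bp_width (wrap u) = 6 + bp_width u.
Proof.
move=> wu; rewrite bp_width_peel lnob_wrap // (inner_frame [:: a]).
rewrite bp_width_peel lnob_frame_b_ab // (inner_frame [:: b]).
by rewrite bp_width_peel lnob_frame_ab // (inner_frame [:: a; b]).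
Qed.

Lemma wrappable_wrap u : wrappable u -> wrappable (wrap u).
Proof.
case/and3P => bab_free aba_free _; rewrite /wrappable wrapE rhalf_cat // -!catA andbT.
rewrite (@infix_cat3 _ _ (rhalf u) [:: a; b; b] [:: a; a; b; b]) // negb_or bab_free.
by rewrite (@infix_cat3 _ _ (rhalf u) [:: a; b] [:: b; a; a; b]) // negb_or aba_free.
Qed.

Definition centers : seq (seq 'I_2) :=
  [:: [::]; [:: a]; [:: a; a]; [:: a; a; a]; [:: a; b; b; a];
      [:: a; b; a; b; a]; [:: a; b; a; b; b; a]; [:: a; a; b; a; b; a; a]].

Lemma center_spec i : i < 8 -> let c := nth [::] centers i in
  [/\ size c = i, bp_width c = minn i 5 & wrappable c].
Proof.
by case: i => [|[|[|[|[|[|[|[|i]]]]]]]] // _ /=; rewrite bp_width_seqE; split; vm_compute.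
Qed.

Lemma iter_wrap k c : wrappable c -> [/\ wrappable (iter k wrap c),
  size (iter k wrap c) = 8 * k + size c & bp_width (iter k wrap c) = 6 * k + bp_width c].
Proof.
move=> wc; elim: k => [|k [wk sk bk]]; first by [].
rewrite /= wrappable_wrap // bp_width_wrap // bk !size_cat sk /=; split; lia.
Qed.

Lemma width_bound_attained n :
  exists w : seq 'I_2, size w = n /\ bp_width w = width_bound n.
Proof.
have [size_c width_c wc] := center_spec (ltn_pmod n (isT : 0 < 8)).
have [_ size_w width_w] := iter_wrap (n %/ 8) wc.
exists (iter (n %/ 8) wrap (nth [::] centers (n %% 8))).
by rewrite size_w width_w size_c width_c; split; [lia | by []].
Qed.

Lemma f2E n : f 2 n = width_bound n.
Proof.
apply/eqP; rewrite eqn_leq; apply/andP; split.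
  apply/bigmax_leqP => t _.
  by have := bp_width_le_bound (@no_three_unit_peels_binary) t; rewrite size_tuple.
have [w [/eqP size_w <-]] := width_bound_attained n.
exact: (@leq_bigmax _ (fun t : n.-tuple 'I_2 => bp_width (tval t)) (Tuple size_w)).
Qed.

Theorem theorem6 (l : nat) :
  (forall i : nat, i <= 5 -> f 2 (8 * l + i) = 6 * l + i) /\
  f 2 (8 * l + 6) = 6 * l + 5 /\ f 2 (8 * l + 7) = 6 * l + 5.
Proof. by split => [i i_le5 | ]; rewrite !f2E /width_bound; [lia | split; lia]. Qed.
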